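(* Let $0<\alpha<1$, $T>0$, $N_T$ a positive integer, $\Delta t=T/N_T$, $t_k=k\Delta t$, and let $\tilde s_i>0,\ \tilde w_i>0$ ($i=1,\dots,N_A$) satisfy $\left|t^{-\alpha}-\sum_{i=1}^{N_A}\tilde w_ie^{-\tilde s_it}\right|\le\varepsilon_0$ for all $t\in[\Delta t,T]$. Let $1\le n\le N_T$, $u\in C^2[0,t_n]$, $u^k=u(t_k)$, and $$R:={}^C_0D_t^\alpha u(t)\big|_{t=t_n}-\mathbb{D}_t^\alpha u^n.$$ Then $$|R|\le\frac{\Delta t^{2-\alpha}}{\Gamma(2-\alpha)}\Big(\frac{1-\alpha}{12}+\frac{2^{2-\alpha}}{2-\alpha}-(1+2^{-\alpha})\Big)\max_{0\le t\le t_n}|u''(t)|+\frac{\varepsilon_0\,t_{n-1}}{\Gamma(1-\alpha)}\max_{0\le t\le t_{n-1}}|u'(t)|.$$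
   Context: The Caputo derivative is ${}^C_0D_t^\alpha u(t)=\frac{1}{\Gamma(1-\alpha)}\int_0^t\frac{u'(\tau)}{(t-\tau)^\alpha}d\tau$. For a sequence $(u^k)_{k\ge0}$, the FIDR operator is $$\mathbb{D}_t^\alpha u^n=\frac{u^n-u^{n-1}}{\Delta t^\alpha\Gamma(2-\alpha)}+\frac{1}{\Gamma(1-\alpha)}\sum_{i=1}^{N_A}\tilde w_i\tilde\Psi_i^n,$$ where $\tilde\Psi_i^1=0$ and, for $n\ge2$, $\tilde\Psi_i^n=e^{-\tilde s_i\Delta t}\tilde\Psi_i^{n-1}+\frac{(u^{n-1}-u^{n-2})(1-e^{-\tilde s_i\Delta t})e^{-\tilde s_i\Delta t}}{\tilde s_i\Delta t}$. *)

From Stdlib Require Import Reals.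
From Coquelicot Require Import Coquelicot.
Open Scope R_scope.

Definition Gamma (x : R) : R :=
  RInt_gen (fun t => Rpower t (x - 1) * exp (- t))
           (at_right 0) (Rbar_locally p_infty).

Definition caputo (alpha : R) (u : R -> R) (t : R) : R :=
  / Gamma (1 - alpha) *
  RInt_gen (fun tau => Derive u tau * Rpower (t - tau) (- alpha))
           (at_point 0) (at_left t).

(* Psi~_i^n for a node s, step dt and sequence U; Psi^1 = 0 and for n >= 2
   Psi^n = e^{-s dt} Psi^{n-1}
           + (U^{n-1} - U^{n-2}) (1 - e^{-s dt}) e^{-s dt} / (s dt).
   (The value at n = 0 is irrelevant and set to 0.) *)
Fixpoint fidr_psi (s dt : R) (U : nat -> R) (n : nat) : R :=
  match n with
  | O => 0
  | S O => 0
  | S ((S m) as k) =>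
      exp (- (s * dt)) * fidr_psi s dt U k
      + (U k - U m) * (1 - exp (- (s * dt))) * exp (- (s * dt)) / (s * dt)
  end.

Definition fidr (alpha dt : R) (NA : nat) (s w : nat -> R)
  (U : nat -> R) (n : nat) : R :=
  (U n - U (n - 1)%nat) / (Rpower dt alpha * Gamma (2 - alpha))
  + / Gamma (1 - alpha) * sum_n_m (fun i => w i * fidr_psi (s i) dt U n) 1 NA.

Definition is_max_on (f : R -> R) (a b M : R) : Prop :=
  (forall t, a <= t <= b -> f t <= M) /\ (exists t, a <= t <= b /\ f t = M).

(* Split the Caputo integral at t_(n-1).  On the last cell the scheme integrates the
   linear interpolant of u exactly against (t_n - tau)^(-alpha); integrating by parts
   against the interpolation residual, which is O(h^2 max|u''|), gives an
   O(h^(2-alpha)) error.  On [0, t_(n-1)] the recursion for Psi computes exactly the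
   integral of the piecewise-linear interpolant of u against the sum-of-exponentials
   kernel.  The history error is therefore the interpolation error against the true
   kernel, bounded cell by cell (a telescoping sum over the far cells, an exact
   computation on the cell next to t_(n-1)), plus the kernel approximation error,
   at most eps0 h per cell times a slope bounded by max|u'|.  Finally
   Gamma(2 - alpha) = (1 - alpha) Gamma(1 - alpha) assembles the constants. *)

From Stdlib Require Import Reals Lra Lia Psatz.
From Coquelicot Require Import Coquelicot.
Open Scope R_scope.

Section RealLimits.

Context {T : Type} {F : (T -> Prop) -> Prop} {FF : Filter F}.

Lemma filterlim_Rplus (f g : T -> R) (a b : R) :
  filterlim f F (locally a) -> filterlim g F (locally b) ->
  filterlim (fun x => f x + g x) F (locally (a + b)).
Proof.
  intros Hf Hg.
  eapply filterlim_comp_2; [exact Hf | exact Hg | exact (filterlim_plus (K := R_AbsRing) a b)].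
Qed.

Lemma filterlim_Rmult_l (c : R) (f : T -> R) (a : R) :
  filterlim f F (locally a) -> filterlim (fun x => c * f x) F (locally (c * a)).
Proof.
  intros Hf. eapply filterlim_comp; [exact Hf | exact (filterlim_scal_r (K := R_AbsRing) c a)].
Qed.

Lemma filterlim_abs_le_0 (f g : T -> R) :
  F (fun x => Rabs (f x) <= g x) -> filterlim g F (locally 0) ->
  filterlim f F (locally 0).
Proof.
  intros Hfg Hg. apply (filterlim_le_le (fun x => -1 * g x) f g (Finite 0)).
  - eapply filter_imp; [| exact Hfg]. intros x Hx. apply Rabs_le_between in Hx. lra.
  - replace (Finite 0) with (Finite (-1 * 0)) by (f_equal; ring).
    exact (filterlim_Rmult_l (-1) g 0 Hg).
  - exact Hg.
Qed.

Context {PF : ProperFilter F}.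

Lemma filterlim_Rle (f g : T -> R) (a b : R) :
  F (fun x => f x <= g x) -> filterlim f F (locally a) -> filterlim g F (locally b) ->
  a <= b.
Proof. intros Hfg Hf Hg. exact (filterlim_le f g a b Hfg Hf Hg). Qed.

Lemma ex_filterlim_of_cauchy (f : T -> R) :
  (forall eps : posreal, exists P, F P /\ forall x y, P x -> P y -> Rabs (f x - f y) < eps) ->
  exists l, filterlim f F (locally l).
Proof.
  intros Hc. set (G := filtermap f F).
  assert (PG : ProperFilter G) by (apply filtermap_proper_filter; exact PF).
  assert (CG : cauchy G).
  { intros eps. destruct (Hc eps) as [P [HP HPc]]. destruct (filter_ex P HP) as [x0 Hx0].
    exists (f x0). unfold G, filtermap. eapply filter_imp; [| exact HP].
    intros y Hy. exact (HPc y x0 Hy Hx0). }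
  exists (lim G). apply filterlim_locally. exact (complete_cauchy G PG CG).
Qed.

Lemma ex_filterlim_by_comparison (f g : T -> R) (D : T -> Prop) (lg : R) :
  F D -> (forall x y, D x -> D y -> Rabs (f x - f y) <= Rabs (g x - g y)) ->
  filterlim g F (locally lg) -> exists l, filterlim f F (locally l).
Proof.
  intros HD Hfg Hg. apply ex_filterlim_of_cauchy. intros eps.
  assert (He : 0 < eps / 2) by (destruct eps; simpl; lra).
  exists (fun x => D x /\ ball lg (eps / 2) (g x)). split.
  - apply filter_and; [exact HD | exact (proj1 (filterlim_locally g lg) Hg (mkposreal _ He))].
  - intros x y [Dx Bx] [Dy By]. change (Rabs (g x - lg) < eps / 2) in Bx.
    change (Rabs (g y - lg) < eps / 2) in By.
    apply (Rle_lt_trans _ _ _ (Hfg x y Dx Dy)).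
    replace (g x - g y) with ((g x - lg) - (g y - lg)) by ring.
    apply (Rle_lt_trans _ _ _ (Rabs_triang _ _)). rewrite Rabs_Ropp. lra.
Qed.

Lemma filterlim_Rabs_le (f : T -> R) (l B : R) :
  F (fun x => Rabs (f x) <= B) -> filterlim f F (locally l) -> Rabs l <= B.
Proof.
  intros HB Hf. apply Rabs_le. split.
  - cut (-1 * l <= B); [lra|].
    apply (filterlim_Rle (fun x => -1 * f x) (fun _ => B));
      [| apply filterlim_Rmult_l, Hf | apply filterlim_const].
    eapply filter_imp; [|exact HB]. intros x Hx. apply Rabs_le_between in Hx. lra.
  - apply (filterlim_Rle f (fun _ => B)); [| exact Hf | apply filterlim_const].
    eapply filter_imp; [|exact HB]. intros x Hx. apply Rabs_le_between in Hx. lra.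
Qed.

End RealLimits.

Lemma is_RInt_gen_of_filterlim {F : (R -> Prop) -> Prop} {FF : Filter F}
  (f I : R -> R) (a l : R) :
  F (fun b => is_RInt f a b (I b)) -> filterlim I F (locally l) ->
  is_RInt_gen f (at_point a) F l.
Proof.
  intros HI Hl P HP.
  apply Filter_prod with (fun x => x = a) (fun b => is_RInt f a b (I b) /\ P (I b)).
  - reflexivity.
  - apply filter_and; [exact HI | exact (Hl P HP)].
  - intros x y -> [Hi Hp]. exists (I y). split; assumption.
Qed.

Lemma ex_RInt_continuous_on (f : R -> R) (a b : R) :
  a <= b -> (forall t, a <= t <= b -> continuous f t) -> ex_RInt f a b.
Proof.
  intros Hab Hc. apply (ex_RInt_continuous (V := R_CompleteNormedModule)). intros z Hz.
  rewrite Rmin_left, Rmax_right in Hz by lra. exact (Hc z Hz).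
Qed.

Lemma abs_RInt_le_RInt (f g : R -> R) (a b : R) :
  a <= b -> ex_RInt f a b -> ex_RInt g a b ->
  (forall t, a <= t <= b -> Rabs (f t) <= g t) -> Rabs (RInt f a b) <= RInt g a b.
Proof.
  intros Hab Hf Hg Hfg. apply Rabs_le. split.
  - rewrite <- (RInt_opp (V := R_CompleteNormedModule)) by exact Hg.
    apply RInt_le; [exact Hab | apply (ex_RInt_opp g); exact Hg | exact Hf | ].
    intros t Ht. specialize (Hfg t ltac:(lra)). apply Rabs_le_between in Hfg.
    change (opp (g t)) with (- g t). lra.
  - apply RInt_le; [exact Hab | exact Hf | exact Hg | ].
    intros t Ht. specialize (Hfg t ltac:(lra)). apply Rabs_le_between in Hfg. lra.
Qed.

Lemma abs_RInt_diff_le (f g : R -> R) (a x y : R) :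
  ex_RInt f a x -> ex_RInt f a y -> ex_RInt g a x -> ex_RInt g a y ->
  (forall t, Rmin x y <= t <= Rmax x y -> Rabs (f t) <= g t) ->
  Rabs (RInt f a x - RInt f a y) <= Rabs (RInt g a x - RInt g a y).
Proof.
  intros Hfx Hfy Hgx Hgy Hfg.
  assert (Hdiff : forall h p q, ex_RInt h a p -> ex_RInt h a q ->
            ex_RInt h q p /\ RInt h a p - RInt h a q = RInt h q p).
  { intros h p q Hp Hq.
    assert (Hqp : ex_RInt h q p)
      by (apply ex_RInt_Chasles with a; [apply ex_RInt_swap|]; assumption).
    split; [exact Hqp|]. rewrite <- (RInt_Chasles h a q p Hq Hqp).
    change (plus ?u ?v) with (u + v). ring. }
  destruct (Rle_or_lt y x) as [Hyx | Hxy].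
  - destruct (Hdiff f x y Hfx Hfy) as [Ef ->]. destruct (Hdiff g x y Hgx Hgy) as [Eg ->].
    apply (Rle_trans _ _ _ (abs_RInt_le_RInt f g y x Hyx Ef Eg
             ltac:(intros t Ht; apply Hfg; rewrite Rmin_right, Rmax_left by lra; exact Ht))).
    apply Rle_abs.
  - rewrite (Rabs_minus_sym (RInt f a x)), (Rabs_minus_sym (RInt g a x)).
    destruct (Hdiff f y x Hfy Hfx) as [Ef ->]. destruct (Hdiff g y x Hgy Hgx) as [Eg ->].
    apply (Rle_trans _ _ _ (abs_RInt_le_RInt f g x y (Rlt_le _ _ Hxy) Ef Eg
             ltac:(intros t Ht; apply Hfg; rewrite Rmin_left, Rmax_right by lra; exact Ht))).
    apply Rle_abs.
Qed.

(* Coquelicot's generic lemmas on sums and integrals state equalities in the carrier of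
   an abstract structure, which [ring] and [field] do not recognize as [R]. *)
Ltac as_R_eq := lazymatch goal with |- ?x = ?y => change (@eq R x y) end.

Lemma sum_n_m_swap (F : nat -> nat -> R) (a b c d : nat) :
  sum_n_m (fun i => sum_n_m (fun k => F i k) c d) a b =
  sum_n_m (fun k => sum_n_m (fun i => F i k) a b) c d.
Proof.
  assert (Hempty : forall c' d', (d' < c')%nat ->
            sum_n_m (fun i => sum_n_m (fun k => F i k) c' d') a b = zero).
  { intros c' d' Hcd.
    rewrite (sum_n_m_ext _ (fun _ => zero)) by (intros i; apply sum_n_m_zero, Hcd).
    apply sum_n_m_const_zero. }
  induction d as [|d IH].
  - destruct c as [|c].
    + rewrite sum_n_n. apply sum_n_m_ext. intros i. apply sum_n_n.
    + rewrite Hempty, sum_n_m_zero by lia. reflexivity.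
  - destruct (Compare_dec.le_lt_dec c (S d)) as [Hc | Hc].
    + rewrite sum_n_Sm, <- IH, <- sum_n_m_plus by lia.
      apply sum_n_m_ext. intros i. apply sum_n_Sm. lia.
    + rewrite Hempty, sum_n_m_zero by lia. reflexivity.
Qed.

Lemma sum_n_m_telescope (g : nat -> R) (a b : nat) : (a <= S b)%nat ->
  sum_n_m (fun k => g (S k) - g k) a b = g (S b) - g a.
Proof.
  induction b as [|b IH]; intros Hab.
  - destruct a as [|[|a]]; [rewrite sum_n_n; reflexivity | | lia].
    rewrite sum_n_m_zero by lia. change (0 = g 1%nat - g 1%nat). ring.
  - destruct (Nat.eq_dec a (S (S b))) as [-> | Ha].
    + rewrite sum_n_m_zero by lia. change (0 = g (S (S b)) - g (S (S b))). ring.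
    + rewrite sum_n_Sm, IH by lia.
      change (g (S b) - g a + (g (S (S b)) - g (S b)) = g (S (S b)) - g a).
      ring.
Qed.

Lemma is_RInt_sum_n_m (f : nat -> R -> R) (I : nat -> R) (a b : R) (m : nat) :
  (forall i, (1 <= i <= m)%nat -> is_RInt (f i) a b (I i)) ->
  is_RInt (fun x => sum_n_m (fun i => f i x) 1 m) a b (sum_n_m I 1 m).
Proof.
  induction m as [|m IH]; intros Hf.
  - pose proof (is_RInt_const (V := R_NormedModule) a b 0) as H0.
    change (scal (b - a) 0) with ((b - a) * 0) in H0. rewrite Rmult_0_r in H0.
    rewrite sum_n_m_zero by lia.
    apply (is_RInt_ext (fun _ => 0)); [intros x _; rewrite sum_n_m_zero by lia; reflexivity|].
    exact H0.
  - rewrite sum_n_Sm by lia.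
    apply (is_RInt_ext (fun x => plus (sum_n_m (fun i => f i x) 1 m) (f (S m) x))).
    + intros x _. rewrite sum_n_Sm by lia. reflexivity.
    + apply (is_RInt_plus (V := R_NormedModule));
        [apply IH; intros i Hi; apply Hf; lia | apply Hf; lia].
Qed.

Lemma sum_n_m_Rmult_l (c : R) (F : nat -> R) (a b : nat) :
  c * sum_n_m F a b = sum_n_m (fun k => c * F k) a b.
Proof. symmetry. exact (sum_n_m_mult_l (K := R_AbsRing) c F a b). Qed.

Lemma sum_n_m_le_loc (a b : nat -> R) (p q : nat) :
  (forall k, (p <= k <= q)%nat -> a k <= b k) -> sum_n_m a p q <= sum_n_m b p q.
Proof.
  induction q as [|q IH]; intros Hab.
  - destruct p as [|p].
    + rewrite !sum_n_n. apply Hab. lia.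
    + rewrite !sum_n_m_zero by lia. apply Rle_refl.
  - destruct (Compare_dec.le_lt_dec p (S q)) as [Hp | Hp].
    + rewrite !sum_n_Sm by lia. apply Rplus_le_compat; [apply IH; intros k Hk | ]; apply Hab; lia.
    + rewrite !sum_n_m_zero by lia. apply Rle_refl.
Qed.

Lemma abs_sum_n_m_le (a b : nat -> R) (p q : nat) :
  (forall k, (p <= k <= q)%nat -> Rabs (a k) <= b k) -> Rabs (sum_n_m a p q) <= sum_n_m b p q.
Proof.
  intros Hab. apply (Rle_trans _ _ _ (norm_sum_n_m (K := R_AbsRing) (V := R_NormedModule) a p q)).
  exact (sum_n_m_le_loc _ _ p q Hab).
Qed.

Lemma sum_n_m_Rplus (a b : nat -> R) (p q : nat) :
  sum_n_m (fun k => a k + b k) p q = sum_n_m a p q + sum_n_m b p q.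
Proof. exact (sum_n_m_plus (G := R_AbelianMonoid) a b p q). Qed.

Lemma sum_n_m_Rminus (a b : nat -> R) (p q : nat) :
  sum_n_m (fun k => a k - b k) p q = sum_n_m a p q - sum_n_m b p q.
Proof.
  rewrite (sum_n_m_ext _ (fun k => a k + -1 * b k)) by (intros k; as_R_eq; ring).
  rewrite sum_n_m_Rplus, <- sum_n_m_Rmult_l. as_R_eq. ring.
Qed.

Lemma MVT_on (f df : R -> R) (a b : R) : a <= b ->
  (forall t, a <= t <= b -> is_derive f t (df t)) ->
  exists c, a <= c <= b /\ f b - f a = df c * (b - a).
Proof.
  intros Hab Hf.
  destruct (MVT_gen f a b df) as [c [Hc E]].
  - intros t Ht. rewrite Rmin_left, Rmax_right in Ht by lra. apply Hf. lra.
  - intros t Ht. rewrite Rmin_left, Rmax_right in Ht by lra.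
    apply continuity_pt_filterlim, (ex_derive_continuous (V := R_NormedModule)).
    exists (df t). exact (Hf t Ht).
  - rewrite Rmin_left, Rmax_right in Hc by lra. exists c. split; [lra | exact E].
Qed.

Lemma is_derive_congr (f g : R -> R) (x l l' : R) :
  is_derive f x l -> (forall t, f t = g t) -> l = l' -> is_derive g x l'.
Proof. intros H Hfg <-. exact (is_derive_ext f g x l Hfg H). Qed.

Lemma Rpower_pos (x y : R) : 0 < Rpower x y.
Proof. apply exp_pos. Qed.

Lemma Rpower_shifts (x a : R) : 0 < x ->
  Rpower x (- a) = x * Rpower x (- a - 1) /\
  Rpower x (1 - a) = x ^ 2 * Rpower x (- a - 1) /\
  Rpower x (2 - a) = x ^ 3 * Rpower x (- a - 1).
Proof.
  intros Hx.
  assert (Hsucc : forall y, Rpower x (y + 1) = x * Rpower x y).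
  { intros y. rewrite Rpower_plus, Rpower_1 by exact Hx. ring. }
  replace (- a) with ((- a - 1) + 1) at 1 by ring.
  replace (1 - a) with (((- a - 1) + 1) + 1) by ring.
  replace (2 - a) with ((((- a - 1) + 1) + 1) + 1) by ring.
  rewrite !Hsucc. repeat split; ring.
Qed.

Lemma Rle_Rpower_l_nonpos (x y z : R) : z <= 0 -> 0 < x <= y -> Rpower y z <= Rpower x z.
Proof.
  intros Hz Hxy.
  assert (Hinv : forall w, Rpower w z = / Rpower w (- z))
    by (intros w; rewrite Rpower_Ropp, Rinv_inv; reflexivity).
  rewrite !Hinv.
  apply Rinv_le_contravar; [apply Rpower_pos | apply Rle_Rpower_l; lra].
Qed.

Lemma is_derive_Rpower (y t : R) : 0 < t ->
  is_derive (fun s => Rpower s y) t (y * Rpower t (y - 1)).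
Proof. intros Ht. apply is_derive_Reals, derivable_pt_lim_power, Ht. Qed.

Lemma is_derive_Rpower_sub (c y t : R) : t < c ->
  is_derive (fun s => Rpower (c - s) y) t (- (y * Rpower (c - t) (y - 1))).
Proof.
  intros Ht.
  assert (Hlin : is_derive (fun s => c - s) t (-1)) by (auto_derive; [exact I | ring]).
  pose proof (is_derive_comp _ _ t _ _ (is_derive_Rpower y (c - t) ltac:(lra)) Hlin) as H.
  replace (- (y * Rpower (c - t) (y - 1))) with (-1 * (y * Rpower (c - t) (y - 1))) by ring.
  exact H.
Qed.

Lemma continuous_Rpower (y t : R) : 0 < t -> continuous (fun s => Rpower s y) t.
Proof.
  intros Ht. apply (ex_derive_continuous (V := R_NormedModule)).
  eexists. exact (is_derive_Rpower y t Ht).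
Qed.

Lemma continuous_Rpower_sub (c y t : R) : t < c -> continuous (fun s => Rpower (c - s) y) t.
Proof.
  intros Ht. apply (ex_derive_continuous (V := R_NormedModule)).
  eexists. exact (is_derive_Rpower_sub c y t Ht).
Qed.

Lemma Rpower_at_right_0 (y : R) : 0 < y ->
  filterlim (fun x => Rpower x y) (at_right 0) (locally 0).
Proof.
  intros Hy. apply filterlim_locally. intros eps.
  exists (mkposreal _ (Rpower_pos eps (/ y))). intros x Hx Hx0.
  change (Rabs (x - 0) < Rpower eps (/ y)) in Hx. change (Rabs (Rpower x y - 0) < eps).
  rewrite Rminus_0_r in *. rewrite Rabs_pos_eq in Hx by lra.
  rewrite Rabs_pos_eq by apply Rlt_le, Rpower_pos.
  apply Rlt_le_trans with (Rpower (Rpower eps (/ y)) y).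
  - apply Rlt_Rpower_l; lra.
  - rewrite Rpower_mult, Rinv_l, Rpower_1 by (apply cond_pos || lra). lra.
Qed.

Lemma Rpower_sub_at_left (c y : R) : 0 < y ->
  filterlim (fun b => Rpower (c - b) y) (at_left c) (locally 0).
Proof.
  intros Hy. apply (filterlim_comp _ _ _ (fun b => c - b) (fun x => Rpower x y) _ (at_right 0)).
  - intros P [d Hd]. exists d. intros x Hx Hxc. apply Hd; [| lra].
    change (Rabs (x - c) < d) in Hx. change (Rabs (c - x - 0) < d).
    rewrite Rminus_0_r, Rabs_minus_sym. exact Hx.
  - exact (Rpower_at_right_0 y Hy).
Qed.

Lemma Rpower_diff_lower_bound (a x h : R) : 0 < a -> 0 < h < x ->
  h * Rpower x (- a - 1) <= (Rpower (x - h) (- a) - Rpower x (- a)) / a.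
Proof.
  intros Ha Hh.
  destruct (MVT_on (fun y => Rpower y (- a)) (fun y => - a * Rpower y (- a - 1)) (x - h) x)
    as [xi [Hxi Exi]]; [lra | intros y Hy; apply is_derive_Rpower; lra |].
  pose proof (Rle_Rpower_l_nonpos xi x (- a - 1) ltac:(lra) ltac:(lra)).
  apply Rmult_le_reg_r with a; [exact Ha|].
  replace ((Rpower (x - h) (- a) - Rpower x (- a)) / a * a)
    with (Rpower (x - h) (- a) - Rpower x (- a)) by (field; lra).
  replace (x - (x - h)) with h in Exi by ring.
  assert (0 <= h * a) by nra. nra.
Qed.

Lemma exp_opp_at_pinfty :
  filterlim (fun b => exp (- b)) (Rbar_locally p_infty) (locally 0).
Proof.
  apply (is_lim_comp exp (fun b => - b) p_infty 0 m_infty is_lim_exp_m).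
  - exact (is_lim_opp (fun b => b) p_infty p_infty (is_lim_id p_infty)).
  - exists 0. intros b _. discriminate.
Qed.

Lemma mul_exp_opp_at_pinfty :
  filterlim (fun b => b * exp (- b)) (Rbar_locally p_infty) (locally 0).
Proof.
  apply (filterlim_ext (fun b => -1 * (- b * exp (- b)))); [intros b; ring|].
  replace 0 with (-1 * 0) by ring. apply filterlim_Rmult_l.
  apply (is_lim_comp (fun y => y * exp y) (fun b => - b) p_infty 0 m_infty is_lim_mul_exp_m).
  - exact (is_lim_opp (fun b => b) p_infty p_infty (is_lim_id p_infty)).
  - exists 0. intros b _. discriminate.
Qed.

(** * The Gamma function *)

Definition Gamma_integrand (x t : R) : R := Rpower t (x - 1) * exp (- t).

Lemma Gamma_integrand_pos (x t : R) : 0 < Gamma_integrand x t.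
Proof. apply Rmult_lt_0_compat; [apply Rpower_pos | apply exp_pos]. Qed.

Lemma Gamma_integrand_le_Rpower (x t : R) : 0 < t -> Gamma_integrand x t <= Rpower t (x - 1).
Proof.
  intros Ht. unfold Gamma_integrand. pose proof (Rpower_pos t (x - 1)).
  assert (exp (- t) <= 1) by (rewrite <- exp_0; left; apply exp_increasing; lra). nra.
Qed.

Lemma Gamma_integrand_le_exp (x t : R) : x <= 1 -> 1 <= t -> Gamma_integrand x t <= exp (- t).
Proof.
  intros Hx Ht. unfold Gamma_integrand. rewrite <- (Rmult_1_l (exp (- t))) at 2.
  apply Rmult_le_compat_r; [apply Rlt_le, exp_pos|].
  apply Rle_trans with (Rpower t 0); [apply Rle_Rpower; lra | rewrite Rpower_O; lra].
Qed.

Lemma continuous_Gamma_integrand (x t : R) : 0 < t -> continuous (Gamma_integrand x) t.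
Proof.
  intros Ht. apply (continuous_mult (fun s => Rpower s (x - 1)) (fun s => exp (- s))).
  - exact (continuous_Rpower _ _ Ht).
  - apply (ex_derive_continuous (V := R_NormedModule)). auto_derive. exact I.
Qed.

Lemma ex_RInt_Gamma_integrand (x a b : R) : 0 < a -> 0 < b -> ex_RInt (Gamma_integrand x) a b.
Proof.
  intros Ha Hb. apply (ex_RInt_continuous (V := R_CompleteNormedModule)). intros t Ht.
  apply continuous_Gamma_integrand.
  apply Rlt_le_trans with (Rmin a b); [apply Rmin_glb_lt|]; tauto.
Qed.

Lemma RInt_Gamma_integrand_pos (x a b : R) : 0 < a < b -> 0 < RInt (Gamma_integrand x) a b.
Proof.
  intros Hab. replace 0 with (RInt (fun _ => 0) a b) at 1 by (rewrite RInt_const; apply Rmult_0_r).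
  apply RInt_lt; [lra | intros t Ht; apply continuous_Gamma_integrand; lra
                 | intros t _; apply continuous_const | intros t _; apply Gamma_integrand_pos].
Qed.

Lemma at_right_0_pos : at_right 0 (fun b => 0 < b < 1).
Proof.
  exists (mkposreal 1 Rlt_0_1). intros b Hb Hb0.
  change (Rabs (b - 0) < 1) in Hb. rewrite Rminus_0_r in Hb. apply Rabs_def2 in Hb. lra.
Qed.

Lemma Gamma_of_limits (x l0 l1 : R) :
  filterlim (fun b => RInt (Gamma_integrand x) 1 b) (at_right 0) (locally l0) ->
  filterlim (fun b => RInt (Gamma_integrand x) 1 b) (Rbar_locally p_infty) (locally l1) ->
  Gamma x = l1 - l0.
Proof.
  intros H0 H1.
  assert (G0 : is_RInt_gen (Gamma_integrand x) (at_point 1) (at_right 0) l0).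
  { apply (is_RInt_gen_of_filterlim _ (fun b => RInt (Gamma_integrand x) 1 b)); [|exact H0].
    eapply filter_imp; [|exact at_right_0_pos]. intros b Hb.
    apply (RInt_correct (V := R_CompleteNormedModule)), ex_RInt_Gamma_integrand; lra. }
  assert (G1 : is_RInt_gen (Gamma_integrand x) (at_point 1) (Rbar_locally p_infty) l1).
  { apply (is_RInt_gen_of_filterlim _ (fun b => RInt (Gamma_integrand x) 1 b)); [|exact H1].
    exists 0. intros b Hb.
    apply (RInt_correct (V := R_CompleteNormedModule)), ex_RInt_Gamma_integrand; lra. }
  apply is_RInt_gen_unique.
  apply (is_RInt_gen_swap (Fa := at_right 0) (Fb := at_point 1)) in G0.
  replace (l1 - l0) with (plus (opp l0) l1) by (change (- l0 + l1 = l1 - l0); ring).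
  exact (is_RInt_gen_Chasles (Fa := at_right 0) (Fc := Rbar_locally p_infty) _ 1 _ _ G0 G1).
Qed.

Lemma Gamma_integral_at_0 (x : R) : 0 < x ->
  exists l, filterlim (fun b => RInt (Gamma_integrand x) 1 b) (at_right 0) (locally l) /\ l <= 0.
Proof.
  intros Hx.
  set (g := fun t => Rpower t (x - 1)).
  assert (Hg : forall b, 0 < b -> is_RInt g 1 b (/ x * Rpower b x - / x * Rpower 1 x)).
  { intros b Hb. apply (is_RInt_derive (V := R_CompleteNormedModule) (fun t => / x * Rpower t x));
      intros t Ht;
      assert (0 < t) by (apply Rlt_le_trans with (Rmin 1 b); [apply Rmin_glb_lt|]; lra).
    - pose proof (is_derive_scal _ t (/ x) _ (is_derive_Rpower x t H)) as D.
      replace (g t) with (/ x * (x * Rpower t (x - 1))) by (unfold g; field; lra). exact D.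
    - exact (continuous_Rpower _ _ H). }
  destruct (ex_filterlim_by_comparison (PF := at_right_proper_filter 0)
              (fun b => RInt (Gamma_integrand x) 1 b) (fun b => RInt g 1 b) (fun b => 0 < b < 1)
              (/ x * 0 + - (/ x * Rpower 1 x)) at_right_0_pos) as [l Hl].
  - intros p q Hp Hq.
    apply abs_RInt_diff_le;
      [apply ex_RInt_Gamma_integrand; lra | apply ex_RInt_Gamma_integrand; lra
      | eexists; apply Hg; lra | eexists; apply Hg; lra |].
    intros t Ht. assert (0 < t) by (apply Rlt_le_trans with (Rmin p q); [apply Rmin_glb_lt|]; lra).
    rewrite Rabs_pos_eq by apply Rlt_le, Gamma_integrand_pos.
    apply Gamma_integrand_le_Rpower. lra.
  - apply (filterlim_ext_loc (fun b => / x * Rpower b x + - (/ x * Rpower 1 x))).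
    + eapply filter_imp; [|exact at_right_0_pos]. intros b Hb.
      symmetry. apply (is_RInt_unique (V := R_CompleteNormedModule)), Hg. lra.
    + apply filterlim_Rplus; [|apply filterlim_const].
      apply filterlim_Rmult_l, Rpower_at_right_0, Hx.
  - exists l. split; [exact Hl|].
    apply (filterlim_Rle (PF := at_right_proper_filter 0)
             (fun b => RInt (Gamma_integrand x) 1 b) (fun _ => 0));
      [|exact Hl|apply filterlim_const].
    eapply filter_imp; [|exact at_right_0_pos]. intros b Hb.
    rewrite <- (opp_RInt_swap (V := R_CompleteNormedModule))
      by (apply ex_RInt_Gamma_integrand; lra).
    pose proof (RInt_Gamma_integrand_pos x b 1 Hb).
    change (- RInt (Gamma_integrand x) b 1 <= 0). lra.
Qed.

Lemma Gamma_integral_at_infty (x : R) : 0 < x <= 1 ->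
  exists l, filterlim (fun b => RInt (Gamma_integrand x) 1 b) (Rbar_locally p_infty) (locally l)
    /\ 0 < l.
Proof.
  intros Hx.
  set (g := fun t => exp (- t)).
  assert (Hg : forall b, is_RInt g 1 b (- exp (- b) - - exp (- 1))).
  { intros b. apply (is_RInt_derive (V := R_CompleteNormedModule) (fun t => - exp (- t)));
      intros t _; unfold g.
    - auto_derive; [exact I | ring].
    - apply (ex_derive_continuous (V := R_NormedModule)). auto_derive. exact I. }
  assert (Hpinf : Rbar_locally p_infty (fun b => 1 < b)) by (exists 1; tauto).
  destruct (ex_filterlim_by_comparison (PF := Rbar_locally_filter p_infty)
              (fun b => RInt (Gamma_integrand x) 1 b) (fun b => RInt g 1 b) (fun b => 1 < b)
              (-1 * 0 + - - exp (- 1)) Hpinf) as [l Hl].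
  - intros p q Hp Hq.
    apply abs_RInt_diff_le;
      [apply ex_RInt_Gamma_integrand; lra | apply ex_RInt_Gamma_integrand; lra
      | eexists; apply Hg | eexists; apply Hg |].
    intros t Ht. assert (1 <= t) by (apply Rle_trans with (Rmin p q); [apply Rmin_glb|]; lra).
    rewrite Rabs_pos_eq by apply Rlt_le, Gamma_integrand_pos.
    apply Gamma_integrand_le_exp; lra.
  - apply (filterlim_ext (fun b => -1 * exp (- b) + - - exp (- 1))).
    + intros b. symmetry. apply (is_RInt_unique (V := R_CompleteNormedModule)).
      replace (-1 * exp (- b) + - - exp (- 1)) with (- exp (- b) - - exp (- 1)) by ring. apply Hg.
    + apply filterlim_Rplus; [|apply filterlim_const].
      apply filterlim_Rmult_l, exp_opp_at_pinfty.
  - exists l. split; [exact Hl|].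
    apply Rlt_le_trans with (1 := RInt_Gamma_integrand_pos x 1 2 ltac:(lra)).
    apply (filterlim_Rle (PF := Rbar_locally_filter p_infty) (fun _ => RInt (Gamma_integrand x) 1 2)
             (fun b => RInt (Gamma_integrand x) 1 b)); [|apply filterlim_const|exact Hl].
    exists 2. intros b Hb.
    rewrite <- (RInt_Chasles (Gamma_integrand x) 1 2 b) by (apply ex_RInt_Gamma_integrand; lra).
    pose proof (RInt_Gamma_integrand_pos x 2 b ltac:(lra)). change plus with Rplus. lra.
Qed.

Lemma Gamma_pos (x : R) : 0 < x <= 1 -> 0 < Gamma x.
Proof.
  intros Hx.
  destruct (Gamma_integral_at_0 x ltac:(lra)) as [l0 [H0 Hl0]].
  destruct (Gamma_integral_at_infty x Hx) as [l1 [H1 Hl1]].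
  rewrite (Gamma_of_limits x l0 l1 H0 H1). lra.
Qed.

Lemma RInt_Gamma_integrand_succ (x b : R) : 0 < b ->
  RInt (Gamma_integrand (x + 1)) 1 b
  = x * RInt (Gamma_integrand x) 1 b + -1 * (Rpower b x * exp (- b) - Rpower 1 x * exp (- 1)).
Proof.
  intros Hb.
  assert (Hpsi : is_RInt (fun t => x * Gamma_integrand x t - Gamma_integrand (x + 1) t) 1 b
                   (Rpower b x * exp (- b) - Rpower 1 x * exp (- 1))).
  { apply (is_RInt_derive (V := R_CompleteNormedModule) (fun t => Rpower t x * exp (- t)));
      intros t Ht; assert (Ht0 : 0 < t)
        by (apply Rlt_le_trans with (Rmin 1 b); [apply Rmin_glb_lt|]; lra).
    - assert (Hexp : is_derive (fun s => exp (- s)) t (- exp (- t)))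
        by (auto_derive; [exact I | ring]).
      apply (is_derive_congr _ _ _ _ _
               (is_derive_mult _ _ t _ _ (is_derive_Rpower x t Ht0) Hexp Rmult_comm));
        [intros s; reflexivity|].
      unfold Gamma_integrand. replace (x + 1 - 1) with x by ring.
      change plus with Rplus. change mult with Rmult. ring.
    - apply (continuous_minus (fun t => x * Gamma_integrand x t)).
      + apply (continuous_scal_r x (Gamma_integrand x)), continuous_Gamma_integrand, Ht0.
      + apply continuous_Gamma_integrand, Ht0. }
  pose proof (is_RInt_minus _ _ _ _ _ _
    (is_RInt_scal _ _ _ x _ (RInt_correct (V := R_CompleteNormedModule) _ _ _
       (ex_RInt_Gamma_integrand x 1 b Rlt_0_1 Hb))) Hpsi) as H.
  apply (is_RInt_unique (V := R_CompleteNormedModule)).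
  replace (x * RInt (Gamma_integrand x) 1 b
           + -1 * (Rpower b x * exp (- b) - Rpower 1 x * exp (- 1)))
    with (minus (scal x (RInt (Gamma_integrand x) 1 b))
                (Rpower b x * exp (- b) - Rpower 1 x * exp (- 1)))
    by (unfold minus, plus, opp, scal; simpl; unfold mult; simpl; ring).
  eapply is_RInt_ext; [|exact H].
  intros t _. unfold minus, plus, opp, scal; simpl; unfold mult; simpl; ring.
Qed.

Lemma Gamma_succ (x : R) : 0 < x <= 1 -> Gamma (x + 1) = x * Gamma x.
Proof.
  intros Hx.
  destruct (Gamma_integral_at_0 x ltac:(lra)) as [l0 [H0 _]].
  destruct (Gamma_integral_at_infty x Hx) as [l1 [H1 _]].
  set (psi := fun t => Rpower t x * exp (- t)).
  assert (Hpsi_nonneg : forall t, Rabs (psi t) = psi t)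
    by (intros t; apply Rabs_pos_eq, Rmult_le_pos; apply Rlt_le;
        [apply Rpower_pos | apply exp_pos]).
  assert (Hpsi0 : filterlim psi (at_right 0) (locally 0)).
  { apply (filterlim_abs_le_0 _ (fun b => Rpower b x)); [|apply Rpower_at_right_0; lra].
    eapply filter_imp; [|exact at_right_0_pos]. intros b Hb. rewrite Hpsi_nonneg.
    pose proof (Gamma_integrand_le_Rpower (x + 1) b ltac:(lra)) as Hle.
    unfold Gamma_integrand in Hle. replace (x + 1 - 1) with x in Hle by ring. exact Hle. }
  assert (Hpsi1 : filterlim psi (Rbar_locally p_infty) (locally 0)).
  { apply (filterlim_abs_le_0 _ (fun b => b * exp (- b))); [|exact mul_exp_opp_at_pinfty].
    exists 1. intros b Hb. rewrite Hpsi_nonneg. unfold psi.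
    apply Rmult_le_compat_r; [apply Rlt_le, exp_pos|].
    rewrite <- (Rpower_1 b) at 2 by lra. apply Rle_Rpower; lra. }
  assert (Hlim : forall F l psil, Filter F -> F (fun b => 0 < b) ->
            filterlim (fun b => RInt (Gamma_integrand x) 1 b) F (locally l) ->
            filterlim psi F (locally psil) ->
            filterlim (fun b => RInt (Gamma_integrand (x + 1)) 1 b) F
              (locally (x * l + -1 * (psil - psi 1)))).
  { intros F l psil FF Hpos Hl Hpsil.
    apply (filterlim_ext_loc (fun b => x * RInt (Gamma_integrand x) 1 b + -1 * (psi b - psi 1))).
    - eapply filter_imp; [|exact Hpos]. intros b Hb. symmetry.
      exact (RInt_Gamma_integrand_succ x b Hb).
    - apply filterlim_Rplus; [apply filterlim_Rmult_l, Hl|].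
      apply filterlim_Rmult_l, filterlim_Rplus; [exact Hpsil | apply filterlim_const]. }
  rewrite (Gamma_of_limits x l0 l1 H0 H1).
  rewrite (Gamma_of_limits (x + 1) _ _
             (Hlim _ l0 0 _ (filter_imp _ _ (fun b Hb => proj1 Hb) at_right_0_pos) H0 Hpsi0)
             (Hlim _ l1 0 _ (ex_intro _ 0 (fun b Hb => Hb)) H1 Hpsi1)).
  ring.
Qed.

Lemma Gamma_2_minus (al : R) : 0 <= al < 1 -> Gamma (2 - al) = (1 - al) * Gamma (1 - al).
Proof. intros Hal. replace (2 - al) with (1 - al + 1) by ring. apply Gamma_succ. lra. Qed.

Lemma convex_nonpos_of_ends (phi dphi d2phi : R -> R) (a b : R) :
  (forall t, a <= t <= b -> is_derive phi t (dphi t)) ->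
  (forall t, a <= t <= b -> is_derive dphi t (d2phi t)) ->
  (forall t, a <= t <= b -> 0 <= d2phi t) ->
  phi a = 0 -> phi b = 0 -> forall t, a <= t <= b -> phi t <= 0.
Proof.
  intros H1 H2 Hconv Ha Hb t Ht.
  destruct (Rle_or_lt (phi t) 0) as [Hle | Hgt]; [exact Hle | exfalso].
  assert (Hta : a < t) by (destruct (Req_dec a t); [subst; lra | lra]).
  assert (Htb : t < b) by (destruct (Req_dec t b); [subst; lra | lra]).
  destruct (MVT_on phi dphi a t ltac:(lra) ltac:(intros s Hs; apply H1; lra)) as [c1 [Hc1 E1]].
  destruct (MVT_on phi dphi t b ltac:(lra) ltac:(intros s Hs; apply H1; lra)) as [c2 [Hc2 E2]].
  assert (dphi c1 > 0) by (destruct (Rle_or_lt (dphi c1) 0); [nra | assumption]).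
  assert (dphi c2 < 0) by (destruct (Rle_or_lt 0 (dphi c2)); [nra | assumption]).
  destruct (MVT_on dphi d2phi c1 c2 ltac:(lra) ltac:(intros s Hs; apply H2; lra)) as [c3 [Hc3 E3]].
  pose proof (Hconv c3 ltac:(lra)). nra.
Qed.

Lemma linear_interpolation_error (u : R -> R) (a b M : R) : a < b ->
  (forall t, a <= t <= b -> ex_derive u t) ->
  (forall t, a <= t <= b -> ex_derive (Derive u) t) ->
  (forall t, a <= t <= b -> Rabs (Derive (Derive u) t) <= M) ->
  forall t, a <= t <= b ->
  Rabs (u t - u a - (u b - u a) / (b - a) * (t - a)) <= M / 2 * (t - a) * (b - t).
Proof.
  intros Hab H1 H2 HM.
  set (d := (u b - u a) / (b - a)).
  assert (Hside : forall sgn, sgn = 1 \/ sgn = -1 -> forall t, a <= t <= b ->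
            sgn * (u t - u a - d * (t - a)) - M / 2 * (t - a) * (b - t) <= 0).
  { intros sgn Hsgn.
    apply (convex_nonpos_of_ends _ (fun t => sgn * (Derive u t - d) - M / 2 * (a + b - 2 * t))
                                   (fun t => sgn * Derive (Derive u) t + M)).
    - intros s Hs. auto_derive; [exact (H1 s Hs) | change (fun x => u x) with u; ring].
    - intros s Hs. auto_derive; [exact (H2 s Hs) |].
      change (fun x => Derive u x) with (Derive u). field.
    - intros t Ht. pose proof (HM t Ht) as Hb. apply Rabs_le_between in Hb.
      destruct Hsgn; subst; lra.
    - ring.
    - unfold d. field. lra. }
  intros t Ht. apply Rabs_le. fold d.
  pose proof (Hside 1 (or_introl eq_refl) t Ht). pose proof (Hside (-1) (or_intror eq_refl) t Ht).
  lra.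
Qed.

Lemma is_RInt_parabola (a b : R) : is_RInt (fun s => (s - a) * (b - s)) a b ((b - a) ^ 3 / 6).
Proof.
  set (F := fun s => - (s - a) ^ 3 / 3 + (b - a) * (s - a) ^ 2 / 2).
  replace ((b - a) ^ 3 / 6) with (F b - F a) by (unfold F; field).
  apply (is_RInt_derive (V := R_CompleteNormedModule) F).
  - intros x _. unfold F. auto_derive; [exact I | field].
  - intros x _. apply (ex_derive_continuous (V := R_NormedModule)). auto_derive. exact I.
Qed.

Lemma is_RInt_Rpower_sub (c al a b : R) : al <> 1 -> a <= b < c ->
  is_RInt (fun s => Rpower (c - s) (- al)) a b
    ((Rpower (c - a) (1 - al) - Rpower (c - b) (1 - al)) / (1 - al)).
Proof.
  intros Hal Hb.
  set (F := fun s => - / (1 - al) * Rpower (c - s) (1 - al)).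
  replace ((Rpower (c - a) (1 - al) - Rpower (c - b) (1 - al)) / (1 - al)) with (F b - F a)
    by (unfold F; field; lra).
  apply (is_RInt_derive (V := R_CompleteNormedModule) F).
  - intros x Hx. rewrite Rmin_left, Rmax_right in Hx by lra.
    apply (is_derive_congr _ _ _ _ _
             (is_derive_scal _ _ (- / (1 - al)) _ (is_derive_Rpower_sub c (1 - al) x ltac:(lra))));
      [intros t; reflexivity |].
    replace (1 - al - 1) with (- al) by ring. change scal with Rmult. field. lra.
  - intros x Hx. rewrite Rmin_left, Rmax_right in Hx by lra.
    apply continuous_Rpower_sub. lra.
Qed.

Lemma is_RInt_exp_sub (c w si a b : R) : si <> 0 ->
  is_RInt (fun s => w * exp (- (si * (c - s)))) a b
    (w * (exp (- (si * (c - b))) - exp (- (si * (c - a)))) / si).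
Proof.
  intros Hs.
  set (F := fun s => w * exp (- (si * (c - s))) / si).
  replace (w * (exp (- (si * (c - b))) - exp (- (si * (c - a)))) / si) with (F b - F a)
    by (unfold F; field; exact Hs).
  apply (is_RInt_derive (V := R_CompleteNormedModule) F).
  - intros x _. unfold F. auto_derive; [exact I |].
    replace (c + - x) with (c - x) by ring. field. exact Hs.
  - intros x _. apply (ex_derive_continuous (V := R_NormedModule)). auto_derive. exact I.
Qed.

Definition adjacent_cell_const (al : R) : R :=
  2 * (4 * Rpower 2 (- al) - 1) / (2 - al) - (2 * Rpower 2 (- al) + 1).

Lemma is_RInt_adjacent_cell (a h al : R) : 0 < h -> 0 < al < 1 ->
  is_RInt (fun s => (s - a) * (a + h - s) * Rpower (a + 2 * h - s) (- al - 1)) a (a + h)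
    (h ^ 2 * Rpower h (- al) * adjacent_cell_const al / (al * (1 - al))).
Proof.
  intros Hh Hal. set (c := a + 2 * h).
  set (F := fun s => / (2 - al) * Rpower (c - s) (2 - al)
                     - 3 * h / (1 - al) * Rpower (c - s) (1 - al)
                     - 2 * h ^ 2 / al * Rpower (c - s) (- al)).
  replace (h ^ 2 * Rpower h (- al) * adjacent_cell_const al / (al * (1 - al)))
    with (F (a + h) - F a).
  2: { unfold F, c, adjacent_cell_const.
       replace (a + 2 * h - (a + h)) with h by ring. replace (a + 2 * h - a) with (2 * h) by ring.
       rewrite <- !(Rpower_mult_distr 2 h) by lra.
       destruct (Rpower_shifts h al Hh) as [A1 [A2 A3]].
       destruct (Rpower_shifts 2 al ltac:(lra)) as [B1 [B2 B3]].
       rewrite A1, A2, A3, B1, B2, B3. field. lra. }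
  apply (is_RInt_derive (V := R_CompleteNormedModule) F).
  - intros x Hx. rewrite Rmin_left, Rmax_right in Hx by lra.
    assert (Hy : 0 < c - x) by (unfold c; lra).
    pose proof (is_derive_scal _ _ (/ (2 - al)) _
                  (is_derive_Rpower_sub c (2 - al) x ltac:(lra))) as D1.
    pose proof (is_derive_scal _ _ (3 * h / (1 - al)) _
                  (is_derive_Rpower_sub c (1 - al) x ltac:(lra))) as D2.
    pose proof (is_derive_scal _ _ (2 * h ^ 2 / al) _
                  (is_derive_Rpower_sub c (- al) x ltac:(lra))) as D3.
    apply (is_derive_congr _ _ _ _ _
             (is_derive_minus _ _ _ _ _ (is_derive_minus _ _ _ _ _ D1 D2) D3));
      [intros t; reflexivity |].
    change scal with Rmult. change minus with Rminus.
    replace (2 - al - 1) with (1 - al) by ring. replace (1 - al - 1) with (- al) by ring.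
    destruct (Rpower_shifts (c - x) al Hy) as [A1 [A2 _]]. rewrite A1, A2.
    replace (a + h) with (c - h) by (unfold c; ring).
    replace a with (c - 2 * h) at 1 by (unfold c; ring).
    field. lra.
  - intros x Hx. rewrite Rmin_left, Rmax_right in Hx by lra.
    apply (continuous_mult (fun s => (s - a) * (a + h - s))).
    + apply (ex_derive_continuous (V := R_NormedModule)). auto_derive. exact I.
    + apply continuous_Rpower_sub. unfold c; lra.
Qed.

Lemma adjacent_cell_const_nonneg (al : R) : 0 < al < 1 -> 0 <= adjacent_cell_const al.
Proof.
  intros Hal. pose proof (is_RInt_adjacent_cell 0 1 al Rlt_0_1 Hal) as P.
  assert (Hint : 0 <= 1 ^ 2 * Rpower 1 (- al) * adjacent_cell_const al / (al * (1 - al))).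
  { rewrite <- (is_RInt_unique (V := R_CompleteNormedModule) _ _ _ _ P).
    apply RInt_ge_0; [lra | eexists; exact P |].
    intros x Hx. apply Rmult_le_pos; [apply Rmult_le_pos; lra | apply Rlt_le, Rpower_pos]. }
  replace (1 ^ 2 * Rpower 1 (- al)) with 1 in Hint
    by (unfold Rpower; rewrite ln_1, Rmult_0_r, exp_0; ring).
  rewrite Rmult_1_l in Hint.
  assert (Hpos : 0 < al * (1 - al)) by nra.
  apply (Rmult_le_reg_r (/ (al * (1 - al)))); [apply Rinv_0_lt_compat, Hpos|].
  rewrite Rmult_0_l. exact Hint.
Qed.

Definition last_cell_primitive (a h al s : R) : R :=
  - h * Rpower (a + h - s) (1 - al) / (1 - al) + Rpower (a + h - s) (2 - al) / (2 - al).

Lemma is_RInt_last_cell (a h al b : R) : 0 < h -> 0 < al < 1 -> a <= b < a + h ->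
  is_RInt (fun s => (s - a) * Rpower (a + h - s) (- al)) a b
    (last_cell_primitive a h al b - last_cell_primitive a h al a).
Proof.
  intros Hh Hal Hb. set (c := a + h).
  apply (is_RInt_derive (V := R_CompleteNormedModule) (last_cell_primitive a h al)).
  - intros x Hx. rewrite Rmin_left, Rmax_right in Hx by lra.
    assert (Hy : 0 < c - x) by (unfold c; lra).
    pose proof (is_derive_scal _ _ (- h / (1 - al)) _
                  (is_derive_Rpower_sub c (1 - al) x ltac:(lra))) as D1.
    pose proof (is_derive_scal _ _ (/ (2 - al)) _
                  (is_derive_Rpower_sub c (2 - al) x ltac:(lra))) as D2.
    apply (is_derive_congr _ _ _ _ _ (is_derive_plus _ _ _ _ _ D1 D2)).
    + intros t. unfold last_cell_primitive. change scal with Rmult. change plus with Rplus.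
      fold c. field. lra.
    + change scal with Rmult. change plus with Rplus.
      replace (2 - al - 1) with (1 - al) by ring. replace (1 - al - 1) with (- al) by ring.
      destruct (Rpower_shifts (c - x) al Hy) as [A1 [A2 _]]. rewrite A1, A2.
      replace a with (c - h) at 1 by (unfold c; ring). field. lra.
  - intros x Hx. rewrite Rmin_left, Rmax_right in Hx by lra.
    apply (continuous_mult (fun s => s - a)).
    + apply (ex_derive_continuous (V := R_NormedModule)). auto_derive. exact I.
    + apply continuous_Rpower_sub. unfold c; lra.
Qed.

Lemma last_cell_primitive_nonpos (a h al b : R) : 0 < h -> 0 < al < 1 -> a <= b < a + h ->
  last_cell_primitive a h al b <= 0.
Proof.
  intros Hh Hal Hb. unfold last_cell_primitive.
  set (y := a + h - b). assert (Hy : 0 < y <= h) by (unfold y; lra).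
  destruct (Rpower_shifts y al ltac:(lra)) as [_ [A2 A3]]. rewrite A2, A3.
  pose proof (Rpower_pos y (- al - 1)) as Hp.
  assert (Hq : 0 <= y ^ 2 * Rpower y (- al - 1)) by (apply Rmult_le_pos; [nra | lra]).
  assert (y ^ 3 * Rpower y (- al - 1) / (2 - al) <= h * (y ^ 2 * Rpower y (- al - 1)) / (1 - al)).
  { apply Rle_trans with (h * (y ^ 2 * Rpower y (- al - 1)) / (2 - al)).
    - apply Rmult_le_compat_r; [apply Rlt_le, Rinv_0_lt_compat; lra|].
      replace (y ^ 3 * Rpower y (- al - 1)) with (y * (y ^ 2 * Rpower y (- al - 1))) by ring.
      apply Rmult_le_compat_r; lra.
    - apply Rmult_le_compat_l; [nra | apply Rinv_le_contravar; lra]. }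
  unfold Rdiv in *. lra.
Qed.

Lemma last_cell_primitive_left (a h al : R) : 0 < h -> 0 < al < 1 ->
  - last_cell_primitive a h al a = h ^ 2 * Rpower h (- al) / ((1 - al) * (2 - al)).
Proof.
  intros Hh Hal. unfold last_cell_primitive. replace (a + h - a) with h by ring.
  destruct (Rpower_shifts h al Hh) as [A1 [A2 A3]]. rewrite A1, A2, A3. field. lra.
Qed.

(** * Interpolation error on one cell *)

Lemma RInt_kernel_by_parts (u : R -> R) (a b c al dl : R) : a <= b < c ->
  (forall t, a <= t <= b -> ex_derive u t) ->
  (forall t, a <= t <= b -> ex_derive (Derive u) t) ->
  ex_RInt (fun s => (Derive u s - dl) * Rpower (c - s) (- al)) a b /\
  ex_RInt (fun s => (u s - u a - dl * (s - a)) * (al * Rpower (c - s) (- al - 1))) a b /\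
  RInt (fun s => (Derive u s - dl) * Rpower (c - s) (- al)) a b =
    (u b - u a - dl * (b - a)) * Rpower (c - b) (- al)
    - RInt (fun s => (u s - u a - dl * (s - a)) * (al * Rpower (c - s) (- al - 1))) a b.
Proof.
  intros Hb H1 H2.
  set (e := fun s => u s - u a - dl * (s - a)).
  set (g1 := fun s => (Derive u s - dl) * Rpower (c - s) (- al)).
  set (g2 := fun s => e s * (al * Rpower (c - s) (- al - 1))).
  assert (De : forall t, a <= t <= b -> is_derive e t (Derive u t - dl)).
  { intros t Ht. unfold e. auto_derive; [exact (H1 t Ht) | change (fun x => u x) with u; ring]. }
  assert (C1 : forall t, a <= t <= b -> continuous g1 t).
  { intros t Ht. apply (continuous_mult (fun s => Derive u s - dl)).
    - apply (continuous_minus (Derive u) (fun _ => dl)); [|apply continuous_const].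
      exact (ex_derive_continuous _ _ (H2 t Ht)).
    - apply continuous_Rpower_sub. lra. }
  assert (C2 : forall t, a <= t <= b -> continuous g2 t).
  { intros t Ht. apply (continuous_mult e).
    - apply (ex_derive_continuous (V := R_NormedModule)). eexists. exact (De t Ht).
    - apply (continuous_scal_r al (fun s => Rpower (c - s) (- al - 1))).
      apply continuous_Rpower_sub. lra. }
  assert (X1 : ex_RInt g1 a b) by (apply ex_RInt_continuous_on; [lra | exact C1]).
  assert (X2 : ex_RInt g2 a b) by (apply ex_RInt_continuous_on; [lra | exact C2]).
  split; [exact X1 | split; [exact X2 |]].
  set (E := fun s => e s * Rpower (c - s) (- al)).
  assert (HE : is_RInt (fun s => g1 s + g2 s) a b (E b - E a)).
  { apply (is_RInt_derive (V := R_CompleteNormedModule) E).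
    - intros x Hx. rewrite Rmin_left, Rmax_right in Hx by lra.
      apply (is_derive_congr _ _ _ _ _
               (is_derive_mult e _ x _ _ (De x Hx) (is_derive_Rpower_sub c (- al) x ltac:(lra))
                  Rmult_comm)); [intros t; reflexivity |].
      unfold g1, g2. change plus with Rplus. change mult with Rmult. ring.
    - intros x Hx. rewrite Rmin_left, Rmax_right in Hx by lra.
      apply (continuous_plus g1 g2); [exact (C1 x Hx) | exact (C2 x Hx)]. }
  assert (Hsum : RInt g1 a b + RInt g2 a b = E b - E a).
  { rewrite <- (is_RInt_unique (V := R_CompleteNormedModule) _ _ _ _ HE).
    symmetry. apply (is_RInt_unique (V := R_CompleteNormedModule)).
    exact (is_RInt_plus _ _ _ _ _ _ (RInt_correct _ _ _ X1) (RInt_correct _ _ _ X2)). }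
  assert (Ea : E a = 0) by (unfold E, e; ring).
  change (RInt g1 a b = e b * Rpower (c - b) (- al) - RInt g2 a b).
  fold (E b). lra.
Qed.

Section CellError.

Variables (u : R -> R) (M al c a h : R).
Hypothesis Hal : 0 < al < 1.
Hypothesis Hh : 0 < h.
Hypothesis Hc : a + h < c.
Hypothesis Hu1 : forall t, a <= t <= a + h -> ex_derive u t.
Hypothesis Hu2 : forall t, a <= t <= a + h -> ex_derive (Derive u) t.
Hypothesis HM : forall t, a <= t <= a + h -> Rabs (Derive (Derive u) t) <= M.

Let slope := (u (a + h) - u a) / h.

Lemma ex_RInt_cell_majorant :
  ex_RInt (fun s => M / 2 * al * ((s - a) * (a + h - s) * Rpower (c - s) (- al - 1))) a (a + h).
Proof.
  apply ex_RInt_continuous_on; [lra|]. intros t Ht.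
  apply (continuous_scal_r (M / 2 * al)
           (fun s => (s - a) * (a + h - s) * Rpower (c - s) (- al - 1))).
  apply (continuous_mult (fun s => (s - a) * (a + h - s))).
  - apply (ex_derive_continuous (V := R_NormedModule)). auto_derive. exact I.
  - apply continuous_Rpower_sub. lra.
Qed.

Lemma cell_error_le_RInt :
  Rabs (RInt (fun s => (Derive u s - slope) * Rpower (c - s) (- al)) a (a + h)) <=
  RInt (fun s => M / 2 * al * ((s - a) * (a + h - s) * Rpower (c - s) (- al - 1))) a (a + h).
Proof.
  destruct (RInt_kernel_by_parts u a (a + h) c al slope ltac:(lra) Hu1 Hu2) as [_ [X2 ->]].
  replace (u (a + h) - u a - slope * (a + h - a)) with 0 by (unfold slope; field; lra).
  rewrite Rmult_0_l, Rminus_0_l, Rabs_Ropp.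
  apply abs_RInt_le_RInt; [lra | exact X2 | exact ex_RInt_cell_majorant |].
  intros z Hz. rewrite Rabs_mult.
  rewrite (Rabs_pos_eq (al * _)) by (apply Rmult_le_pos; [lra | apply Rlt_le, Rpower_pos]).
  pose proof (linear_interpolation_error u a (a + h) M ltac:(lra) Hu1 Hu2 HM z Hz) as Hint.
  replace (a + h - a) with h in Hint by ring.
  pose proof (Rpower_pos (c - z) (- al - 1)).
  apply Rle_trans with (M / 2 * (z - a) * (a + h - z) * (al * Rpower (c - z) (- al - 1))).
  - apply Rmult_le_compat_r; [apply Rmult_le_pos; lra | exact Hint].
  - right. ring.
Qed.

Lemma cell_error_le_far :
  Rabs (RInt (fun s => (Derive u s - slope) * Rpower (c - s) (- al)) a (a + h)) <=
  M / 2 * al * Rpower (c - (a + h)) (- al - 1) * (h ^ 3 / 6).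
Proof.
  apply (Rle_trans _ _ _ cell_error_le_RInt).
  assert (HM0 : 0 <= M)
    by (pose proof (HM a ltac:(lra)); pose proof (Rabs_pos (Derive (Derive u) a)); lra).
  set (k := M / 2 * al * Rpower (c - (a + h)) (- al - 1)).
  assert (Hk : is_RInt (fun s => k * ((s - a) * (a + h - s))) a (a + h) (k * (h ^ 3 / 6))).
  { pose proof (is_RInt_scal _ _ _ k _ (is_RInt_parabola a (a + h))) as P.
    replace (a + h - a) with h in P by ring. exact P. }
  rewrite <- (is_RInt_unique (V := R_CompleteNormedModule) _ _ _ _ Hk).
  apply RInt_le; [lra | exact ex_RInt_cell_majorant | eexists; exact Hk |].
  intros x Hx. unfold k.
  pose proof (Rle_Rpower_l_nonpos (c - (a + h)) (c - x) (- al - 1) ltac:(lra) ltac:(lra)).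
  assert (0 <= M / 2 * al * ((x - a) * (a + h - x))) by (apply Rmult_le_pos; [nra | nra]).
  nra.
Qed.

Lemma cell_error_le_adjacent : c = a + 2 * h ->
  Rabs (RInt (fun s => (Derive u s - slope) * Rpower (c - s) (- al)) a (a + h)) <=
  M / 2 * (h ^ 2 * Rpower h (- al) * adjacent_cell_const al / (1 - al)).
Proof.
  intros Ec. apply (Rle_trans _ _ _ cell_error_le_RInt). rewrite Ec. right.
  pose proof (is_RInt_scal _ _ _ (M / 2 * al) _ (is_RInt_adjacent_cell a h al Hh Hal)) as P.
  change scal with Rmult in P.
  rewrite (is_RInt_unique (V := R_CompleteNormedModule) _ _ _ _ P). field. lra.
Qed.

End CellError.

(** * The last cell *)

Section LastCell.

Variables (u : R -> R) (M al a h : R).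
Hypothesis Hal : 0 < al < 1.
Hypothesis Hh : 0 < h.
Hypothesis Hu1 : forall t, a <= t <= a + h -> ex_derive u t.
Hypothesis Hu2 : forall t, a <= t <= a + h -> ex_derive (Derive u) t.
Hypothesis HM : forall t, a <= t <= a + h -> Rabs (Derive (Derive u) t) <= M.

Let c := a + h.
Let slope := (u c - u a) / h.
Let residual (s : R) := u s - u a - slope * (s - a).
Let residual_integrand (s : R) := residual s * (al * Rpower (c - s) (- al - 1)).
Let residual_integral (b : R) := RInt residual_integrand a b.
Let majorant (s : R) := M / 2 * al * ((s - a) * Rpower (c - s) (- al)).

Lemma last_cell_M_nonneg : 0 <= M.
Proof. pose proof (HM a ltac:(lra)). pose proof (Rabs_pos (Derive (Derive u) a)). lra. Qed.

Lemma at_left_last_cell : at_left c (fun b => a < b < c).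
Proof.
  exists (mkposreal h Hh). intros x Hx Hxc. change (Rabs (x - c) < h) in Hx.
  apply Rabs_def2 in Hx. unfold c in *. lra.
Qed.

Lemma residual_bound (z : R) : a <= z <= c -> Rabs (residual z) <= M / 2 * (z - a) * (c - z).
Proof.
  intros Hz.
  pose proof (linear_interpolation_error u a c M ltac:(unfold c; lra) Hu1 Hu2 HM z Hz) as H.
  replace (c - a) with h in H by (unfold c; ring). exact H.
Qed.

Lemma residual_integrand_le_majorant (z : R) : a <= z < c ->
  Rabs (residual_integrand z) <= majorant z.
Proof.
  intros Hz. unfold residual_integrand, majorant. rewrite Rabs_mult.
  rewrite (Rabs_pos_eq (al * _)) by (apply Rmult_le_pos; [lra | apply Rlt_le, Rpower_pos]).
  destruct (Rpower_shifts (c - z) al ltac:(lra)) as [Hshift _]. rewrite Hshift.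
  pose proof (residual_bound z ltac:(lra)). pose proof (Rpower_pos (c - z) (- al - 1)).
  apply Rle_trans with (M / 2 * (z - a) * (c - z) * (al * Rpower (c - z) (- al - 1))).
  - apply Rmult_le_compat_r; [apply Rmult_le_pos; lra | assumption].
  - right. ring.
Qed.

Lemma ex_RInt_residual_integrand (b : R) : a <= b < c -> ex_RInt residual_integrand a b.
Proof.
  intros Hb. destruct (RInt_kernel_by_parts u a b c al slope Hb) as [_ [X _]]; [..|exact X];
    intros t Ht; [apply Hu1 | apply Hu2]; unfold c in Hb; lra.
Qed.

Lemma is_RInt_majorant (b : R) : a <= b < c ->
  is_RInt majorant a b (M / 2 * al * (last_cell_primitive a h al b - last_cell_primitive a h al a)).
Proof.
  intros Hb. exact (is_RInt_scal _ _ _ (M / 2 * al) _ (is_RInt_last_cell a h al b Hh Hal Hb)).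
Qed.

Lemma majorant_integral_limit :
  filterlim (fun b => RInt majorant a b) (at_left c)
    (locally (M / 2 * al * (0 + - last_cell_primitive a h al a))).
Proof.
  apply (filterlim_ext_loc (fun b => M / 2 * al * (last_cell_primitive a h al b
                                                   + - last_cell_primitive a h al a))).
  - eapply filter_imp; [|exact at_left_last_cell]. intros b Hb. symmetry.
    rewrite (is_RInt_unique (V := R_CompleteNormedModule) _ _ _ _ (is_RInt_majorant b ltac:(lra))).
    ring.
  - apply filterlim_Rmult_l, filterlim_Rplus; [|apply filterlim_const]. unfold last_cell_primitive.
    replace 0 with (- h / (1 - al) * 0 + / (2 - al) * 0) by ring.
    apply (filterlim_ext (fun b => - h / (1 - al) * Rpower (c - b) (1 - al)
                                   + / (2 - al) * Rpower (c - b) (2 - al)));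
      [intros b; unfold c; field; lra|].
    apply filterlim_Rplus; apply filterlim_Rmult_l, Rpower_sub_at_left; lra.
Qed.

(* The improper integral of the residual converges by comparison with the majorant, whose
   primitive [last_cell_primitive] is nonpositive before [c] and vanishes at [c]. *)
Lemma residual_integral_limit :
  exists J, filterlim residual_integral (at_left c) (locally J) /\
    Rabs J <= M / 2 * al * (h ^ 2 * Rpower h (- al) / ((1 - al) * (2 - al))).
Proof.
  pose proof last_cell_M_nonneg.
  destruct (ex_filterlim_by_comparison (PF := at_left_proper_filter c) residual_integral
              (fun b => RInt majorant a b) (fun b => a < b < c)
              (M / 2 * al * (0 + - last_cell_primitive a h al a)) at_left_last_cell) as [J HJ];
    [| exact majorant_integral_limit |].
  - intros x y Hx Hy.
    apply abs_RInt_diff_le;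
      [apply ex_RInt_residual_integrand; lra | apply ex_RInt_residual_integrand; lra
      | eexists; apply is_RInt_majorant; lra | eexists; apply is_RInt_majorant; lra |].
    intros z Hz. apply residual_integrand_le_majorant. split.
    + apply Rle_trans with (Rmin x y); [apply Rmin_glb|]; lra.
    + apply Rle_lt_trans with (Rmax x y); [lra | apply Rmax_lub_lt; lra].
  - exists J. split; [exact HJ|].
    apply (filterlim_Rabs_le (PF := at_left_proper_filter c) residual_integral); [|exact HJ].
    eapply filter_imp; [|exact at_left_last_cell]. intros b Hb.
    eapply Rle_trans.
    { apply (abs_RInt_le_RInt _ majorant a b);
        [lra | apply ex_RInt_residual_integrand; lra | eexists; apply is_RInt_majorant; lra
        | intros z Hz; apply residual_integrand_le_majorant; lra]. }
    rewrite (is_RInt_unique (V := R_CompleteNormedModule) _ _ _ _ (is_RInt_majorant b ltac:(lra))).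
    rewrite <- (last_cell_primitive_left a h al Hh Hal).
    pose proof (last_cell_primitive_nonpos a h al b Hh Hal ltac:(unfold c in Hb; lra)).
    apply Rmult_le_compat_l; [apply Rmult_le_pos; lra | lra].
Qed.

Lemma residual_boundary_limit :
  filterlim (fun b => residual b * Rpower (c - b) (- al)) (at_left c) (locally 0).
Proof.
  pose proof last_cell_M_nonneg.
  apply (filterlim_abs_le_0 _ (fun b => M / 2 * h * Rpower (c - b) (1 - al))).
  - eapply filter_imp; [|exact at_left_last_cell]. intros b Hb.
    rewrite Rabs_mult, (Rabs_pos_eq (Rpower _ _)) by apply Rlt_le, Rpower_pos.
    destruct (Rpower_shifts (c - b) al ltac:(lra)) as [A1 [A2 _]]. rewrite A1, A2.
    pose proof (residual_bound b ltac:(lra)) as Hres. pose proof (Rpower_pos (c - b) (- al - 1)).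
    assert (Hq : 0 <= (c - b) * Rpower (c - b) (- al - 1)) by (apply Rmult_le_pos; lra).
    apply Rle_trans with (M / 2 * (b - a) * (c - b) * ((c - b) * Rpower (c - b) (- al - 1))).
    + apply Rmult_le_compat_r; assumption.
    + assert (b - a <= h) by (unfold c in Hb; lra).
      assert (0 <= M / 2 * (c - b) * ((c - b) * Rpower (c - b) (- al - 1)))
        by (apply Rmult_le_pos; [apply Rmult_le_pos|]; lra).
      nra.
  - replace 0 with (M / 2 * h * 0) by ring. apply filterlim_Rmult_l, Rpower_sub_at_left. lra.
Qed.

Lemma is_RInt_last_cell_kernel (b : R) : a <= b < c ->
  is_RInt (fun y => Derive u y * Rpower (c - y) (- al)) a b
    ((residual b * Rpower (c - b) (- al) + -1 * residual_integral b)
     + (slope * Rpower h (1 - al) / (1 - al) + - (slope / (1 - al)) * Rpower (c - b) (1 - al))).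
Proof.
  intros Hb.
  destruct (RInt_kernel_by_parts u a b c al slope Hb) as [X1 [_ E]];
    [intros t Ht; apply Hu1; unfold c in Hb; lra | intros t Ht; apply Hu2; unfold c in Hb; lra |].
  pose proof (is_RInt_plus _ _ _ _ _ _ (RInt_correct (V := R_CompleteNormedModule) _ _ _ X1)
                (is_RInt_scal _ _ _ slope _ (is_RInt_Rpower_sub c al a b ltac:(lra) Hb))) as P.
  change plus with Rplus in P. change scal with Rmult in P.
  rewrite E in P. replace (c - a) with h in P by (unfold c; ring).
  apply (is_RInt_ext (fun y => (Derive u y - slope) * Rpower (c - y) (- al)
                               + slope * Rpower (c - y) (- al))); [intros y _; as_R_eq; ring|].
  replace ((residual b * Rpower (c - b) (- al) + -1 * residual_integral b)
           + (slope * Rpower h (1 - al) / (1 - al)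
              + - (slope / (1 - al)) * Rpower (c - b) (1 - al)))
    with ((u b - u a - slope * (b - a)) * Rpower (c - b) (- al)
          - RInt (fun s => (u s - u a - slope * (s - a)) * (al * Rpower (c - s) (- al - 1))) a b
          + slope * ((Rpower h (1 - al) - Rpower (c - b) (1 - al)) / (1 - al)))
    by (unfold residual_integral, residual_integrand, residual; field; lra).
  exact P.
Qed.

Lemma last_cell_error :
  exists L, is_RInt_gen (fun y => Derive u y * Rpower (c - y) (- al)) (at_point a) (at_left c) L /\
    Rabs (L - (u c - u a) * Rpower h (- al) / (1 - al))
    <= M / 2 * al * (h ^ 2 * Rpower h (- al) / ((1 - al) * (2 - al))).
Proof.
  destruct residual_integral_limit as [J [HJ HJbound]].
  set (L := (0 + -1 * J) + (slope * Rpower h (1 - al) / (1 - al) + - (slope / (1 - al)) * 0)).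
  exists L. split.
  - apply (is_RInt_gen_of_filterlim _
             (fun b => (residual b * Rpower (c - b) (- al) + -1 * residual_integral b)
               + (slope * Rpower h (1 - al) / (1 - al)
                  + - (slope / (1 - al)) * Rpower (c - b) (1 - al)))).
    + eapply filter_imp; [|exact at_left_last_cell]. intros b Hb.
      apply is_RInt_last_cell_kernel. lra.
    + apply filterlim_Rplus; apply filterlim_Rplus.
      * exact residual_boundary_limit.
      * apply filterlim_Rmult_l, HJ.
      * apply filterlim_const.
      * apply filterlim_Rmult_l, Rpower_sub_at_left. lra.
  - destruct (Rpower_shifts h al Hh) as [A1 [A2 _]].
    replace (L - (u c - u a) * Rpower h (- al) / (1 - al)) with (- J)
      by (unfold L, slope; rewrite A1, A2; field; lra).
    rewrite Rabs_Ropp. exact HJbound.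
Qed.

End LastCell.

(** * The history part *)

Lemma fidr_psi_closed (si dt : R) (U : nat -> R) (p : nat) :
  fidr_psi si dt U (S p) =
  sum_n_m (fun k => (U k - U (k - 1)%nat) * exp (- (si * ((INR (S p) - INR k) * dt)))
                    * (1 - exp (- (si * dt))) / (si * dt)) 1 p.
Proof.
  induction p as [|p IH].
  - rewrite sum_n_m_zero by lia. reflexivity.
  - change (fidr_psi si dt U (S (S p))) with
      (exp (- (si * dt)) * fidr_psi si dt U (S p)
       + (U (S p) - U p) * (1 - exp (- (si * dt))) * exp (- (si * dt)) / (si * dt)).
    rewrite IH, sum_n_Sm by lia. change plus with Rplus. f_equal.
    + rewrite sum_n_m_Rmult_l. apply sum_n_m_ext. intros k.
      as_R_eq.
      replace (- (si * ((INR (S (S p)) - INR k) * dt)))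
        with (- (si * dt) + - (si * ((INR (S p) - INR k) * dt))) by (rewrite !S_INR; ring).
      rewrite exp_plus. unfold Rdiv. ring.
    + replace (- (si * ((INR (S (S p)) - INR (S p)) * dt))) with (- (si * dt))
        by (rewrite !S_INR; ring).
      replace (S p - 1)%nat with p by lia. unfold Rdiv. ring.
Qed.

Section History.

Variables (u : R -> R) (al h eps0 M2 M1 T : R) (n NA : nat) (s w : nat -> R).
Hypothesis Hal : 0 < al < 1.
Hypothesis Hh : 0 < h.
Hypothesis Hn : (1 <= n)%nat.
Hypothesis HnT : INR n * h <= T.
Hypothesis Hu1 : forall t, 0 <= t <= INR n * h -> ex_derive u t.
Hypothesis Hu2 : forall t, 0 <= t <= INR n * h -> ex_derive (Derive u) t.
Hypothesis HM2 : forall t, 0 <= t <= INR n * h -> Rabs (Derive (Derive u) t) <= M2.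
Hypothesis HM1 : forall t, 0 <= t <= INR (n - 1) * h -> Rabs (Derive u t) <= M1.
Hypothesis Hs : forall i, (1 <= i <= NA)%nat -> 0 < s i.
Hypothesis Happrox : forall t, h <= t <= T ->
  Rabs (Rpower t (- al) - sum_n_m (fun i => w i * exp (- (s i * t))) 1 NA) <= eps0.

Let c := INR n * h.
Let node (k : nat) := INR k * h.
Let K (y : R) := Rpower (c - y) (- al).
Let slope (k : nat) := (u (node k) - u (node (k - 1))) / h.
Let cell_error (k : nat) := RInt (fun y => (Derive u y - slope k) * K y) (node (k - 1)) (node k).
(* The integral over cell [k] of the sum-of-exponentials kernel. *)
Let soe_cell (k : nat) :=
  sum_n_m (fun i => w i * (exp (- (s i * (c - node k))) - exp (- (s i * (c - node (k - 1))))) / s i)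
    1 NA.

Lemma node_pred (k : nat) : (1 <= k)%nat -> node k = node (k - 1) + h.
Proof. intros Hk. unfold node. rewrite minus_INR by exact Hk. simpl. ring. Qed.

Lemma node_range (k : nat) : (k <= n - 1)%nat -> 0 <= node k /\ node k + h <= c.
Proof.
  intros Hk. unfold node, c. apply le_INR in Hk. rewrite minus_INR in Hk by exact Hn. simpl in Hk.
  pose proof (pos_INR k). split; [apply Rmult_le_pos; lra | nra].
Qed.

Lemma continuous_history_integrand (y : R) : 0 <= y < c ->
  continuous (fun y => Derive u y * K y) y.
Proof.
  intros Hy. apply (continuous_mult (Derive u) K).
  - apply (ex_derive_continuous (V := R_NormedModule)), Hu2. unfold c in Hy. lra.
  - apply continuous_Rpower_sub. lra.
Qed.

Lemma RInt_history_split (m : nat) : (m <= n - 1)%nat ->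
  RInt (fun y => Derive u y * K y) 0 (node m) =
  sum_n_m (fun k => RInt (fun y => Derive u y * K y) (node (k - 1)) (node k)) 1 m.
Proof.
  induction m as [|m IH]; intros Hm.
  - rewrite sum_n_m_zero by lia. unfold node. rewrite Rmult_0_l.
    exact (RInt_point (V := R_CompleteNormedModule) 0 _).
  - rewrite sum_n_Sm, <- IH by lia. replace (S m - 1)%nat with m by lia.
    destruct (node_range (S m) Hm) as [_ HSm].
    assert (HS : node (S m) = node m + h) by (unfold node; rewrite S_INR; ring).
    assert (Hm0 : 0 <= node m) by (unfold node; apply Rmult_le_pos; [apply pos_INR | lra]).
    rewrite HS in *. symmetry. apply (RInt_Chasles (V := R_CompleteNormedModule)).
    + apply ex_RInt_continuous_on; [exact Hm0 |].
      intros y Hy. apply continuous_history_integrand. lra.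
    + apply ex_RInt_continuous_on; [lra |].
      intros y Hy. apply continuous_history_integrand. lra.
Qed.

Lemma cell_range (k : nat) : (1 <= k <= n - 1)%nat ->
  node k = node (k - 1) + h /\ 0 <= node (k - 1) /\ node k + h <= c.
Proof.
  intros Hk. split; [apply node_pred; lia|].
  split; [apply (node_range (k - 1)); lia | apply (node_range k); lia].
Qed.

Lemma RInt_cell_split (k : nat) : (1 <= k <= n - 1)%nat ->
  RInt (fun y => Derive u y * K y) (node (k - 1)) (node k) =
  cell_error k + slope k * RInt K (node (k - 1)) (node k).
Proof.
  intros Hk. destruct (cell_range k Hk) as [Hnode [H0 Hc]].
  assert (XK : ex_RInt K (node (k - 1)) (node k)).
  { apply ex_RInt_continuous_on; [lra|]. intros y Hy. apply continuous_Rpower_sub. lra. }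
  assert (XE : ex_RInt (fun y => (Derive u y - slope k) * K y) (node (k - 1)) (node k)).
  { apply ex_RInt_continuous_on; [lra|]. intros y Hy.
    apply (continuous_mult (fun y => Derive u y - slope k) K).
    - apply (continuous_minus (Derive u) (fun _ => slope k)); [|apply continuous_const].
      apply (ex_derive_continuous (V := R_NormedModule)), Hu2. unfold c in Hc. lra.
    - apply continuous_Rpower_sub. lra. }
  apply (is_RInt_unique (V := R_CompleteNormedModule)).
  apply (is_RInt_ext (fun y => plus ((Derive u y - slope k) * K y) (scal (slope k) (K y)))).
  - intros y _. as_R_eq. change (plus ?x ?y) with (x + y). change (scal ?x ?y) with (x * y). ring.
  - apply (is_RInt_plus (V := R_NormedModule));
      [|apply (is_RInt_scal (V := R_NormedModule))];
      apply (RInt_correct (V := R_CompleteNormedModule));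
      assumption.
Qed.

Lemma fidr_history_sum :
  sum_n_m (fun i => w i * fidr_psi (s i) h (fun k => u (node k)) n) 1 NA =
  sum_n_m (fun k => slope k * soe_cell k) 1 (n - 1).
Proof.
  transitivity (sum_n_m (fun i => sum_n_m (fun k => w i * (slope k *
      ((exp (- (s i * (c - node k))) - exp (- (s i * (c - node (k - 1))))) / s i)))
      1 (n - 1)) 1 NA).
  - apply sum_n_m_ext_loc. intros i Hi. pose proof (Hs i Hi) as Hsi.
    replace n with (S (n - 1)) at 1 by lia.
    rewrite fidr_psi_closed, sum_n_m_Rmult_l. apply sum_n_m_ext_loc. intros k Hk.
    as_R_eq.
    unfold slope. rewrite (node_pred k) by lia.
    replace (exp (- (s i * (c - node (k - 1)))))
      with (exp (- (s i * (c - (node (k - 1) + h)))) * exp (- (s i * h)))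
      by (rewrite <- exp_plus; f_equal; ring).
    replace ((INR (S (n - 1)) - INR k) * h) with (c - (node (k - 1) + h))
      by (rewrite <- node_pred by lia; unfold c, node; replace (S (n - 1)) with n by lia; ring).
    field. lra.
  - rewrite sum_n_m_swap. apply sum_n_m_ext_loc. intros k Hk. unfold soe_cell.
    rewrite sum_n_m_Rmult_l. apply sum_n_m_ext_loc. intros i Hi.
    as_R_eq. unfold Rdiv. ring.
Qed.

Lemma soe_cell_error (k : nat) : (1 <= k <= n - 1)%nat ->
  Rabs (RInt K (node (k - 1)) (node k) - soe_cell k) <= eps0 * h.
Proof.
  intros Hk. destruct (cell_range k Hk) as [Hnode [H0 Hc]].
  set (K_soe := fun y => sum_n_m (fun i => w i * exp (- (s i * (c - y)))) 1 NA).
  assert (IK : is_RInt K (node (k - 1)) (node k) (RInt K (node (k - 1)) (node k))).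
  { apply (RInt_correct (V := R_CompleteNormedModule)), ex_RInt_continuous_on; [lra|].
    intros y Hy. apply continuous_Rpower_sub. lra. }
  assert (Isoe : is_RInt K_soe (node (k - 1)) (node k) (soe_cell k)).
  { apply is_RInt_sum_n_m. intros i Hi. apply is_RInt_exp_sub. specialize (Hs i Hi). lra. }
  pose proof (is_RInt_minus _ _ _ _ _ _ IK Isoe) as Idiff.
  replace (RInt K (node (k - 1)) (node k) - soe_cell k)
    with (RInt (fun y => minus (K y) (K_soe y)) (node (k - 1)) (node k))
    by (apply (is_RInt_unique (V := R_CompleteNormedModule)); exact Idiff).
  replace (eps0 * h) with ((node k - node (k - 1)) * eps0) by (rewrite Hnode; ring).
  apply abs_RInt_le_const; [lra | eexists; exact Idiff |].
  intros y Hy. apply (Happrox (c - y)). unfold c in *. lra.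
Qed.

Lemma slope_bound (k : nat) : (1 <= k <= n - 1)%nat -> Rabs (slope k) <= M1.
Proof.
  intros Hk. destruct (cell_range k Hk) as [Hnode [H0 Hc]].
  assert (Hkn : node k <= INR (n - 1) * h) by (apply Rmult_le_compat_r; [lra | apply le_INR; lia]).
  destruct (MVT_on u (Derive u) (node (k - 1)) (node k) ltac:(lra)) as [xi [Hxi Exi]].
  { intros y Hy. apply Derive_correct, Hu1. unfold c in Hc. lra. }
  unfold slope. rewrite Exi. replace (node k - node (k - 1)) with h by lra.
  replace (Derive u xi * h / h) with (Derive u xi) by (field; lra).
  apply HM1. lra.
Qed.

Lemma M2_nonneg : 0 <= M2.
Proof.
  pose proof (HM2 0 ltac:(split; [lra | apply Rmult_le_pos; [apply pos_INR | lra]])).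
  pose proof (Rabs_pos (Derive (Derive u) 0)). lra.
Qed.

Lemma cell_regularity (k : nat) : (1 <= k <= n - 1)%nat ->
  (forall t, node (k - 1) <= t <= node (k - 1) + h -> ex_derive u t) /\
  (forall t, node (k - 1) <= t <= node (k - 1) + h -> ex_derive (Derive u) t) /\
  (forall t, node (k - 1) <= t <= node (k - 1) + h -> Rabs (Derive (Derive u) t) <= M2).
Proof.
  intros Hk. destruct (cell_range k Hk) as [Hnode [H0 Hc]]. unfold c in Hc.
  repeat split; intros t Ht; [apply Hu1 | apply Hu2 | apply HM2]; lra.
Qed.

Lemma far_cell_error_bound (k : nat) : (1 <= k)%nat -> (k < n - 1)%nat ->
  Rabs (cell_error k) <=
  M2 * (h ^ 2 / 12) * (Rpower (c - node (S k)) (- al) - Rpower (c - node k) (- al)).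
Proof.
  intros Hk1 Hk2. pose proof M2_nonneg.
  destruct (cell_range k ltac:(lia)) as [Hnode [H0 _]].
  destruct (cell_range (S k) ltac:(lia)) as [HnodeS [_ Hc]].
  replace (S k - 1)%nat with k in HnodeS by lia.
  destruct (cell_regularity k ltac:(lia)) as [U1 [U2 U3]].
  unfold cell_error, slope, K. rewrite Hnode.
  apply (Rle_trans _ _ _ (cell_error_le_far u M2 al c (node (k - 1)) h Hal Hh ltac:(lra) U1 U2 U3)).
  rewrite <- Hnode.
  pose proof (Rpower_diff_lower_bound al (c - node k) h ltac:(lra) ltac:(lra)) as Hdiff.
  replace (c - node k - h) with (c - node (S k)) in Hdiff by lra.
  apply Rle_trans with (M2 * (h ^ 2 / 12) * al * (h * Rpower (c - node k) (- al - 1)));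
    [right; field|].
  replace (M2 * (h ^ 2 / 12) * (Rpower (c - node (S k)) (- al) - Rpower (c - node k) (- al)))
    with (M2 * (h ^ 2 / 12) * al
          * ((Rpower (c - node (S k)) (- al) - Rpower (c - node k) (- al)) / al))
    by (field; lra).
  apply Rmult_le_compat_l; [apply Rmult_le_pos; [apply Rmult_le_pos; nra | lra] | exact Hdiff].
Qed.

(* On the cell next to the last one the telescoping bound above degenerates
   ([c - node k = h]), so there the kernel integral is computed exactly. *)
Lemma adjacent_cell_error_bound : (2 <= n)%nat ->
  Rabs (cell_error (n - 1)) <=
  M2 / 2 * (h ^ 2 * Rpower h (- al) * adjacent_cell_const al / (1 - al)).
Proof.
  intros Hn2.
  destruct (cell_range (n - 1) ltac:(lia)) as [Hnode [H0 Hc]].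
  destruct (cell_regularity (n - 1) ltac:(lia)) as [U1 [U2 U3]].
  unfold cell_error, slope, K. rewrite Hnode.
  apply (cell_error_le_adjacent u M2 al c (node (n - 1 - 1)) h Hal Hh ltac:(lra) U1 U2 U3).
  unfold c, node. rewrite !minus_INR by lia. simpl. ring.
Qed.

Lemma cell_errors_sum_bound :
  Rabs (sum_n_m cell_error 1 (n - 1)) <=
  M2 * (h ^ 2 * Rpower h (- al) / 12)
  + M2 / 2 * (h ^ 2 * Rpower h (- al) * adjacent_cell_const al / (1 - al)).
Proof.
  pose proof M2_nonneg. pose proof (Rpower_pos h (- al)).
  pose proof (adjacent_cell_const_nonneg al Hal).
  assert (0 <= M2 * (h ^ 2 / 12)) by (apply Rmult_le_pos; nra).
  assert (0 <= M2 / 2 * (h ^ 2 * Rpower h (- al) * adjacent_cell_const al / (1 - al))).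
  { apply Rmult_le_pos; [lra|]. apply Rmult_le_pos; [|apply Rlt_le, Rinv_0_lt_compat; lra].
    apply Rmult_le_pos; [apply Rmult_le_pos; nra | lra]. }
  destruct (Nat.eq_dec n 1) as [Hn1 | Hn1].
  { rewrite Hn1, sum_n_m_zero by lia. apply Rle_trans with 0; [right; apply Rabs_R0 | nra]. }
  replace (n - 1)%nat with (S (n - 2)) at 1 by lia.
  rewrite sum_n_Sm by lia. change plus with Rplus.
  apply (Rle_trans _ _ _ (Rabs_triang _ _)), Rplus_le_compat.
  - set (g := fun k => Rpower (c - node k) (- al)).
    apply Rle_trans with (sum_n_m (fun k => M2 * (h ^ 2 / 12) * (g (S k) - g k)) 1 (n - 2)).
    + apply abs_sum_n_m_le. intros k Hk. apply far_cell_error_bound; lia.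
    + rewrite <- sum_n_m_Rmult_l, sum_n_m_telescope by lia.
      unfold g. replace (c - node (S (n - 2))) with h
        by (unfold c, node; replace (S (n - 2)) with (n - 1)%nat by lia;
            rewrite minus_INR by lia; simpl; ring).
      pose proof (Rpower_pos (c - node 1) (- al)).
      replace (M2 * (h ^ 2 * Rpower h (- al) / 12))
        with (M2 * (h ^ 2 / 12) * Rpower h (- al)) by field.
      apply Rmult_le_compat_l; lra.
  - replace (S (n - 2)) with (n - 1)%nat by lia. apply adjacent_cell_error_bound. lia.
Qed.

Lemma history_error_bound :
  Rabs (RInt (fun y => Derive u y * K y) 0 (node (n - 1))
        - sum_n_m (fun i => w i * fidr_psi (s i) h (fun k => u (node k)) n) 1 NA) <=
  M2 * (h ^ 2 * Rpower h (- al) / 12)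
  + M2 / 2 * (h ^ 2 * Rpower h (- al) * adjacent_cell_const al / (1 - al))
  + eps0 * node (n - 1) * M1.
Proof.
  rewrite RInt_history_split, fidr_history_sum by lia.
  rewrite (sum_n_m_ext_loc _ (fun k => cell_error k + slope k * RInt K (node (k - 1)) (node k)))
    by (intros k Hk; apply RInt_cell_split; exact Hk).
  rewrite sum_n_m_Rplus, <- Rplus_minus_assoc, <- sum_n_m_Rminus.
  apply (Rle_trans _ _ _ (Rabs_triang _ _)), Rplus_le_compat; [exact cell_errors_sum_bound |].
  apply Rle_trans with (sum_n_m (fun _ => M1 * (eps0 * h)) 1 (n - 1)).
  - apply abs_sum_n_m_le. intros k Hk. rewrite <- Rmult_minus_distr_l, Rabs_mult.
    apply Rmult_le_compat;
      [apply Rabs_pos | apply Rabs_pos | apply slope_bound | apply soe_cell_error];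
      lia.
  - rewrite sum_n_m_const. replace (S (n - 1) - 1)%nat with (n - 1)%nat by lia.
    unfold node. right. ring.
Qed.

Lemma caputo_split_last_cell (L : R) :
  is_RInt_gen (fun y => Derive u y * K y) (at_point (node (n - 1))) (at_left c) L ->
  caputo al u c = / Gamma (1 - al) * (RInt (fun y => Derive u y * K y) 0 (node (n - 1)) + L).
Proof.
  intros HL. unfold caputo. f_equal. apply is_RInt_gen_unique.
  destruct (node_range (n - 1) ltac:(lia)) as [H0 Hc].
  replace (RInt (fun y => Derive u y * K y) 0 (node (n - 1)) + L)
    with (plus (RInt (fun y => Derive u y * K y) 0 (node (n - 1))) L) by reflexivity.
  apply (is_RInt_gen_Chasles (V := R_NormedModule) (Fa := at_point 0) (Fc := at_left c) _
           (node (n - 1)));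
    [apply is_RInt_gen_at_point | exact HL].
  apply (RInt_correct (V := R_CompleteNormedModule)), ex_RInt_continuous_on; [exact H0|].
  intros y Hy. apply continuous_history_integrand. lra.
Qed.

Lemma caputo_fidr_error_bound :
  Rabs (caputo al u c - fidr al h NA s w (fun k => u (node k)) n) <=
  / Gamma (1 - al) *
    (M2 * (h ^ 2 * Rpower h (- al) / 12)
     + M2 / 2 * (h ^ 2 * Rpower h (- al) * adjacent_cell_const al / (1 - al))
     + eps0 * node (n - 1) * M1
     + M2 / 2 * al * (h ^ 2 * Rpower h (- al) / ((1 - al) * (2 - al)))).
Proof.
  destruct (node_range (n - 1) ltac:(lia)) as [H0 Hc].
  assert (Hlast : c = node (n - 1) + h) by exact (node_pred n Hn).
  destruct (last_cell_error u M2 al (node (n - 1)) h Hal Hh) as [L [HL HLbound]];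
    [intros t Ht; apply Hu1 | intros t Ht; apply Hu2 | intros t Ht; apply HM2 | ];
    [unfold c in Hc; lra .. |].
  rewrite <- Hlast in HL, HLbound.
  rewrite (caputo_split_last_cell L HL).
  pose proof (Gamma_pos (1 - al) ltac:(lra)) as HG1.
  pose proof (Gamma_2_minus al ltac:(lra)) as HG2.
  pose proof (Rpower_pos h al) as Hpow.
  unfold fidr. change (u (node n)) with (u c).
  set (Ih := RInt (fun y => Derive u y * K y) 0 (node (n - 1))).
  set (S := sum_n_m (fun i => w i * fidr_psi (s i) h (fun k => u (node k)) n) 1 NA).
  set (D := u c - u (node (n - 1))).
  replace (/ Gamma (1 - al) * (Ih + L)
           - (D / (Rpower h al * Gamma (2 - al)) + / Gamma (1 - al) * S))
    with (/ Gamma (1 - al) * ((Ih - S) + (L - D * Rpower h (- al) / (1 - al))))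
    by (rewrite HG2, Rpower_Ropp; field; repeat split; lra).
  rewrite Rabs_mult, Rabs_inv, (Rabs_pos_eq (Gamma (1 - al))) by lra.
  apply Rmult_le_compat_l; [apply Rlt_le, Rinv_0_lt_compat, HG1 |].
  apply (Rle_trans _ _ _ (Rabs_triang _ _)), Rplus_le_compat;
    [exact history_error_bound | exact HLbound].
Qed.

End History.

Theorem theorem7
  (alpha T eps0 : R) (NT NA n : nat) (s w : nat -> R) (u : R -> R)
  (M2 M1 : R)
  (Halpha : 0 < alpha < 1) (HT : 0 < T) (HNT : (1 <= NT)%nat)
  (Hs : forall i, (1 <= i <= NA)%nat -> 0 < s i)
  (Hw : forall i, (1 <= i <= NA)%nat -> 0 < w i)
  (Happrox : forall t, T / INR NT <= t <= T ->
     Rabs (Rpower t (- alpha)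
           - sum_n_m (fun i => w i * exp (- (s i * t))) 1 NA) <= eps0)
  (Hn : (1 <= n <= NT)%nat)
  (* u in C^2[0, t_n] *)
  (Hu1 : forall t, 0 <= t <= INR n * (T / INR NT) -> ex_derive u t)
  (Hu2 : forall t, 0 <= t <= INR n * (T / INR NT) -> ex_derive (Derive u) t)
  (Hu2c : forall t, 0 <= t <= INR n * (T / INR NT) ->
     filterlim (Derive_n u 2)
       (within (fun x => 0 <= x <= INR n * (T / INR NT)) (locally t))
       (locally (Derive_n u 2 t)))
  (* M2 = max_{0<=t<=t_n} |u''(t)|, M1 = max_{0<=t<=t_{n-1}} |u'(t)| *)
  (HM2 : is_max_on (fun t => Rabs (Derive_n u 2 t)) 0 (INR n * (T / INR NT)) M2)
  (HM1 : is_max_on (fun t => Rabs (Derive u t)) 0 (INR (n - 1) * (T / INR NT)) M1) :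
  let dt := T / INR NT in
  let R_err := caputo alpha u (INR n * dt)
               - fidr alpha dt NA s w (fun k => u (INR k * dt)) n in
  Rabs R_err <=
    Rpower dt (2 - alpha) / Gamma (2 - alpha) *
      ((1 - alpha) / 12 + Rpower 2 (2 - alpha) / (2 - alpha)
       - (1 + Rpower 2 (- alpha))) * M2
    + eps0 * (INR (n - 1) * dt) / Gamma (1 - alpha) * M1.
Proof.
  cbv zeta. set (h := T / INR NT) in *.
  assert (Hh : 0 < h) by (apply Rdiv_lt_0_compat; [lra | apply lt_0_INR; lia]).
  assert (HnT : INR n * h <= T).
  { replace T with (INR NT * h) by (unfold h; field; apply not_0_INR; lia).
    apply Rmult_le_compat_r; [lra | apply le_INR; lia]. }
  destruct HM2 as [HM2 _], HM1 as [HM1 _].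
  apply (Rle_trans _ _ _ (caputo_fidr_error_bound u alpha h eps0 M2 M1 T n NA s w
                            Halpha Hh ltac:(lia) HnT Hu1 Hu2 HM2 HM1 Hs Happrox)).
  right.
  pose proof (Gamma_pos (1 - alpha) ltac:(lra)) as HG1.
  rewrite Gamma_2_minus by lra.
  destruct (Rpower_shifts h alpha Hh) as [Hh1 [_ Hh3]].
  destruct (Rpower_shifts 2 alpha ltac:(lra)) as [H21 [_ H23]].
  unfold adjacent_cell_const. rewrite Hh1, Hh3, H21, H23. field. lra.
Qed.
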